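(* Let $a,b\in\mathbb{R}$ with $0<a<b$, let $q\geq 1$, $s\in\left(0,\frac1q\right)$, and $\alpha,\lambda\in[0,1]$. Define $$\gamma_1(\alpha,\lambda)=(1-\alpha)\Big[\alpha\lambda-\frac{1-\alpha}{2}\Big],\qquad \gamma_2(\alpha,\lambda)=(\alpha\lambda)^2-\gamma_1(\alpha,\lambda),$$ $$c_1(\alpha,\lambda,s)=(\alpha\lambda)^{s+2}\frac{2}{(s+1)(s+2)}-\alpha\lambda\frac{(1-\alpha)^{s+1}}{s+1}+\frac{(1-\alpha)^{s+2}}{s+2},$$ $$c_2(\alpha,\lambda,s)=(1-\alpha\lambda)^{s+2}\frac{2}{(s+1)(s+2)}-\frac{(1-\alpha\lambda)(1+\alpha^{s+1})}{s+1}+\frac{1+\alpha^{s+2}}{s+2},$$ $$c_3(\alpha,\lambda,s)=\alpha\lambda\frac{(1-\alpha)^{s+1}}{s+1}-\frac{(1-\alpha)^{s+2}}{s+2},\qquad c_4(\alpha,\lambda,s)=\frac{(\alpha\lambda-1)(1-\alpha^{s+1})}{s+1}+\frac{1-\alpha^{s+2}}{s+2},$$ and set $\Delta=\left|\lambda A_\alpha(a^{s+1},b^{s+1})+(1-\lambda)A_\alpha^{s+1}(a,b)-L_{s+1}^{s+1}(a,b)\right|$. Then: (i) if $\alpha\lambda\leq 1-\alpha\leq 1-\lambda(1-\alpha)$, $$\Delta\leq (b-a)(s+1)\Big[\gamma_2^{1-\frac1q}(\alpha,\lambda)\big(c_1(\alpha,\lambda,s)b^{sq}+c_2(\alpha,\lambda,s)a^{sq}\big)^{\frac1q}+\gamma_2^{1-\frac1q}(1-\alpha,\lambda)\big(c_2(1-\alpha,\lambda,s)b^{sq}+c_1(1-\alpha,\lambda,s)a^{sq}\big)^{\frac1q}\Big];$$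 (ii) if $\alpha\lambda\leq 1-\lambda(1-\alpha)\leq 1-\alpha$, $$\Delta\leq (b-a)(s+1)\Big[\gamma_2^{1-\frac1q}(\alpha,\lambda)\big(c_1(\alpha,\lambda,s)b^{sq}+c_2(\alpha,\lambda,s)a^{sq}\big)^{\frac1q}+\gamma_1^{1-\frac1q}(1-\alpha,\lambda)\big(c_4(1-\alpha,\lambda,s)b^{sq}+c_3(1-\alpha,\lambda,s)a^{sq}\big)^{\frac1q}\Big];$$ (iii) if $1-\alpha\leq\alpha\lambda\leq 1-\lambda(1-\alpha)$, $$\Delta\leq (b-a)(s+1)\Big[\gamma_1^{1-\frac1q}(\alpha,\lambda)\big(c_3(\alpha,\lambda,s)b^{sq}+c_4(\alpha,\lambda,s)a^{sq}\big)^{\frac1q}+\gamma_2^{1-\frac1q}(1-\alpha,\lambda)\big(c_2(1-\alpha,\lambda,s)b^{sq}+c_1(1-\alpha,\lambda,s)a^{sq}\big)^{\frac1q}\Big].$$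
   Context: For real $x,y$ and $\alpha\in[0,1]$, the weighted arithmetic mean is $A_\alpha(x,y)=\alpha x+(1-\alpha)y$, and $A_\alpha^{s+1}(x,y)$ denotes $(A_\alpha(x,y))^{s+1}$. For $x,y>0$, $x\neq y$, and $p\in\mathbb{R}\setminus\{-1,0\}$, the $p$-logarithmic mean is $L_p(x,y)=\left(\frac{y^{p+1}-x^{p+1}}{(p+1)(y-x)}\right)^{1/p}$, and $L_{s+1}^{s+1}$ denotes its $(s+1)$-th power. *)

From HB Require Import structures.
From mathcomp Require Import all_boot all_order all_algebra.
From mathcomp Require Import all_classical all_reals.
From mathcomp Require Import exp.
Set Implicit Arguments. Unset Strict Implicit. Unset Printing Implicit Defensive.
Import Order.TTheory GRing.Theory Num.Theory.
Local Open Scope ring_scope.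

Definition Amean {R : realType} (alpha x y : R) : R := alpha * x + (1 - alpha) * y.

Definition Lmean {R : realType} (p x y : R) : R :=
  ((y `^ (p + 1) - x `^ (p + 1)) / ((p + 1) * (y - x))) `^ (p^-1).

Definition gamma1 {R : realType} (alpha lambda : R) : R :=
  (1 - alpha) * (alpha * lambda - (1 - alpha) / 2).

Definition gamma2 {R : realType} (alpha lambda : R) : R :=
  (alpha * lambda) ^+ 2 - gamma1 alpha lambda.

Definition c1 {R : realType} (alpha lambda s : R) : R :=
  (alpha * lambda) `^ (s + 2) * (2 / ((s + 1) * (s + 2)))
  - alpha * lambda * ((1 - alpha) `^ (s + 1) / (s + 1))
  + (1 - alpha) `^ (s + 2) / (s + 2).

Definition c2 {R : realType} (alpha lambda s : R) : R :=
  (1 - alpha * lambda) `^ (s + 2) * (2 / ((s + 1) * (s + 2)))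
  - (1 - alpha * lambda) * (1 + alpha `^ (s + 1)) / (s + 1)
  + (1 + alpha `^ (s + 2)) / (s + 2).

Definition c3 {R : realType} (alpha lambda s : R) : R :=
  alpha * lambda * ((1 - alpha) `^ (s + 1) / (s + 1))
  - (1 - alpha) `^ (s + 2) / (s + 2).

Definition c4 {R : realType} (alpha lambda s : R) : R :=
  (alpha * lambda - 1) * (1 - alpha `^ (s + 1)) / (s + 1)
  + (1 - alpha `^ (s + 2)) / (s + 2).

Definition Delta {R : realType} (a b alpha lambda s : R) : R :=
  `| lambda * Amean alpha (a `^ (s + 1)) (b `^ (s + 1))
     + (1 - lambda) * (Amean alpha a b) `^ (s + 1)
     - (Lmean (s + 1) a b) `^ (s + 1) |.

From mathcomp Require Import all_boot all_order all_algebra.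
From mathcomp Require Import all_classical all_reals.
From mathcomp Require Import topology normedtype derive realfun exp.
From mathcomp Require Import ring lra.
Import Order.TTheory GRing.Theory Num.Theory.
Import numFieldNormedType.Exports.
Local Open Scope ring_scope.
Local Open Scope classical_set_scope.

(* With x(t) = a + (b - a) t, Delta is | int_0^1 (b - a)(s + 1)(t - z(t)) x(t)^s dt |,
   where z = alpha lambda on [0, 1 - alpha] and z = 1 - (1 - alpha) lambda on
   [1 - alpha, 1]; the integrand has the explicit primitive [Phi z].  Since
   u |-> u^(sq) is subadditive, x^(sq) <= b^(sq) t^s + a^(sq) (1 - t)^s, and
   Young's inequality y^(1/q) <= th^(1/q) (y / (q th) + 1 - 1/q) turns this into a
   bound on x^s whose product with |t - z| again has an explicit primitive.
   Integrals are never formed: the comparison |F r - F l| <= H r - H l for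
   |F'| <= H' is enough.  Minimising over th gives the Hoelder-type product
   Gamma^(1 - 1/q) Psi^(1/q), where Gamma = int |t - z| and
   Psi = int |t - z| (b^(sq) t^s + a^(sq) (1 - t)^s) are exactly the constants
   gamma_i and c_i of the statement. *)

Section inequality.
Context {R : realType}.
Implicit Types (p q t u v y z : R).

Lemma is_derive_ge0_le (f df : R -> R) (l r : R) : l <= r ->
  (forall x, x \in `]l, r[%R -> is_derive x 1 f (df x)) ->
  (forall x, x \in `]l, r[%R -> 0 <= df x) ->
  {within `[l, r], continuous f} -> f l <= f r.
Proof.
rewrite le_eqVlt => /predU1P[-> //|lr] fd df_ge0 fc.
have [c cin fE] := MVT lr fd fc.
by rewrite -subr_ge0 fE mulr_ge0 ?df_ge0 // subr_ge0 ltW.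
Qed.

Lemma is_derive_norm_le (F H dF dH : R -> R) (l r : R) : l <= r ->
  (forall x, x \in `]l, r[%R -> is_derive x 1 F (dF x)) ->
  (forall x, x \in `]l, r[%R -> is_derive x 1 H (dH x)) ->
  (forall x, x \in `]l, r[%R -> `|dF x| <= dH x) ->
  {within `[l, r], continuous F} -> {within `[l, r], continuous H} ->
  `|F r - F l| <= H r - H l.
Proof.
move=> lr Fd Hd dFH Fc Hc.
have HFD : H l + F l <= H r + F r.
  apply: (@is_derive_ge0_le _ (fun x => dH x + dF x) _ _ lr
    (fun x xlr => is_deriveD (Hd x xlr) (Fd x xlr))).
    by move=> x /dFH; rewrite -lerBlDr sub0r; apply: le_trans; rewrite -normrN ler_norm.
  exact: within_continuousD.
have HFB : H l - F l <= H r - F r.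
  apply: (@is_derive_ge0_le _ (fun x => dH x - dF x) _ _ lr
    (fun x xlr => is_deriveB (Hd x xlr) (Fd x xlr))).
    by move=> x /dFH; rewrite subr_ge0; apply: le_trans; rewrite ler_norm.
  exact: within_continuousB.
by apply/ler_normlP; split; lra.
Qed.

Lemma is_derive_continuous (f : R -> R) t df :
  is_derive t 1 f df -> {for t, continuous f}.
Proof. by move=> fd; apply/differentiable_continuous/derivable1_diffP; exact: ex_derive. Qed.

Lemma in_itv_oo01 {l r} : 0 <= l -> r <= 1 -> forall t, t \in `]l, r[%R -> 0 < t < 1.
Proof. by move=> l0 r1 t; rewrite in_itv /= => /andP[lt tr]; apply/andP; split; lra. Qed.

Lemma powR_addr1 {t p} : 0 <= t -> 0 < p -> t `^ (p + 1) = t * t `^ p.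
Proof. by move=> t0 p0; rewrite -[in RHS](addrK 1 p) mulr_powRB1 // addr_gt0. Qed.

Lemma is_derive_powR_comp {f : R -> R} {t df} p : is_derive t 1 f df ->
  0 < f t -> is_derive t 1 (fun u => f u `^ p) (p * f t `^ (p - 1) * df).
Proof.
by move=> fd ft; exact: (@is_derive1_comp R (fun x => x `^ p) f t _ _ (is_derive1_powR p ft) fd).
Qed.

Lemma is_derive_oneB t : is_derive t 1 (fun u : R => 1 - u) (-1).
Proof. by apply: is_derive_eq; rewrite add0r mul1r. Qed.

(* Continuity only holds within [0, 1]: [powR] returns 1 on negative arguments. *)
Lemma within01_continuous_powR p : 0 < p ->
  {within `[0, 1], continuous (fun u => u `^ p)}.
Proof.
move=> p0; apply/continuous_within_itvP => //; split.
- move=> t; rewrite in_itv /= => /andP[t0 _].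
  exact/is_derive_continuous/is_derive1_powR.
- by rewrite powR0 ?gt_eqF //; exact: powR_cvg0.
- apply: cvg_at_left_filter.
  exact: (@is_derive_continuous (fun u => u `^ p) 1 _ (is_derive1_powR p ltr01)).
Qed.

Lemma cvg_at_left_oneB : (fun u : R => 1 - u) @ 1^'- --> 0^'+.
Proof.
move=> P [e e0 He]; exists e => // u /= hu ul.
apply: He; last by rewrite subr_gt0.
by move: hu; rewrite /ball_ /= sub0r normrN distrC.
Qed.

Lemma within01_continuous_powR_oneB p : 0 < p ->
  {within `[0, 1], continuous (fun u => (1 - u) `^ p)}.
Proof.
move=> p0.
have cont t : t < 1 -> {for t, continuous (fun u => (1 - u) `^ p)}.
  move=> t1; apply: is_derive_continuous (is_derive_powR_comp p (is_derive_oneB t) _).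
  by rewrite subr_gt0.
apply/continuous_within_itvP => //; split.
- by move=> t; rewrite in_itv /= => /andP[_ /cont].
- exact/cvg_at_right_filter/cont.
- rewrite subrr powR0 ?gt_eqF //.
  exact: (cvg_comp _ _ cvg_at_left_oneB (powR_cvg0 p0)).
Qed.

Lemma powR_subadditive u v p : 0 <= u -> 0 <= v -> 0 <= p <= 1 ->
  (u + v) `^ p <= u `^ p + v `^ p.
Proof.
move=> u0 v0 /andP[p0 p1].
have [uv0|uv_neq0] := eqVneq (u + v) 0.
  have [-> ->] : u = 0 /\ v = 0 by split; lra.
  by rewrite addr0 lerDl powR_ge0.
have w0 : 0 < u + v by rewrite lt_neqAle eq_sym uv_neq0 addr_ge0.
have frac_le x : 0 <= x -> x <= u + v -> x / (u + v) <= (x / (u + v)) `^ p.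
  move=> x0 xw; rewrite le_eqVlt in x0; case/predU1P: x0 => [<-|x0].
    by rewrite mul0r powR_ge0.
  by apply: ger1_powR => //; rewrite divr_gt0 //= ler_pdivrMr // mul1r.
have scale x : 0 <= x -> x `^ p = (x / (u + v)) `^ p * (u + v) `^ p.
  by move=> x0; rewrite -powRM ?divfK ?divr_ge0 ?(ltW w0).
rewrite (scale u u0) (scale v v0) -mulrDl -[leLHS]mul1r ler_wpM2r ?powR_ge0 //.
rewrite -[leLHS](divff (lt0r_neq0 w0)) mulrDl.
by apply: lerD; apply: frac_le; rewrite // ?lerDl ?lerDr.
Qed.

Lemma powR_weight_ge s A B t : 0 < s -> s <= 1 -> 0 <= A <= B -> 0 < t < 1 ->
  A <= B * t `^ s + A * (1 - t) `^ s.
Proof.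
move=> s0 s1 /andP[A0 AB] /andP[t0 t1].
have ts : t <= t `^ s by apply: ger1_powR => //; rewrite t0 ltW.
have t's : 1 - t <= (1 - t) `^ s.
  by apply: ger1_powR => //; rewrite subr_gt0 t1 lerBlDr lerDl ltW.
have : A * t `^ s <= B * t `^ s by rewrite ler_wpM2r ?powR_ge0.
have : A * t <= A * t `^ s by rewrite ler_wpM2l.
have : A * (1 - t) <= A * (1 - t) `^ s by rewrite ler_wpM2l.
lra.
Qed.

Lemma young_powR_inv y q : 0 <= y -> 1 <= q -> y `^ q^-1 <= y / q + (1 - q^-1).
Proof.
move=> y0 q1.
have [->|qn1] := eqVneq q 1; first by rewrite invr1 powRr1 // subrr addr0 mulr1.
have q0 : 0 < q by lra.
have iq : q^-1 < 1 by rewrite invf_lt1 // lt_neqAle eq_sym qn1.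
have := @conjugate_powR R (y `^ q^-1) 1 q (1 - q^-1)^-1 (powR_ge0 _ _) ler01 q0.
rewrite invr_gt0 subr_gt0 invrK addrC subrK => /(_ iq erefl).
by rewrite mulr1 -powRrM mulVf ?gt_eqF // powRr1 // powR1 mul1r.
Qed.

Lemma young_powR_inv_weighted y q th : 0 <= y -> 1 <= q -> 0 < th ->
  y `^ q^-1 <= th `^ q^-1 * (y / (q * th) + (1 - q^-1)).
Proof.
move=> y0 q1 th0.
have yth0 : 0 <= y / th by rewrite divr_ge0 // ltW.
rewrite -{1}(divfK (lt0r_neq0 th0) y) (powRM _ yth0 (ltW th0)) mulrC.
apply: ler_wpM2l; first exact: powR_ge0.
have -> : y / (q * th) = y / th / q by rewrite -mulrA -invfM [th * q]mulrC.
exact: young_powR_inv.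
Qed.

(* The optimal weight is th = C / G. *)
Lemma young_weighted_optimum X K C G q : 0 <= K -> 0 < G -> 0 < C -> 1 <= q ->
  (forall th, 0 < th -> X <= K * (th `^ q^-1 * (C / (q * th) + (1 - q^-1) * G))) ->
  X <= K * (G `^ (1 - q^-1) * C `^ q^-1).
Proof.
move=> K0 G0 C0 q1 /(_ (C / G)) XK; apply: le_trans (XK _) _; first exact: divr_gt0.
have q0 : 0 < q by lra.
have Gq0 : 0 < G `^ q^-1 by rewrite powR_gt0.
have CG : (C / G) `^ q^-1 = C `^ q^-1 / G `^ q^-1.
  apply: (mulIf (lt0r_neq0 Gq0)).
  by rewrite divfK ?gt_eqF // -powRM ?divfK ?gt_eqF // ?divr_ge0 // ltW.
have GG : G `^ (1 - q^-1) = G / G `^ q^-1.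
  by rewrite powRB ?(gt_eqF G0) ?implybT // powRr1 // ltW.
rewrite CG GG le_eqVlt; apply/orP; left; apply/eqP.
by field; rewrite !gt_eqF.
Qed.

Definition clamp l r z : R := Num.max l (Num.min z r).

Lemma clamp_itv {l r} z : l <= r -> l <= clamp l r z <= r.
Proof. by move=> lr; rewrite /clamp le_max lexx /= ge_max lr ge_min lexx orbT. Qed.

Lemma clamp_lt_le {l r z t} : clamp l r z < t -> t < r -> z < t.
Proof. by rewrite /clamp gt_max gt_min => /andP[_ /orP[]// /lt_trans h /h]; rewrite ltxx. Qed.

Lemma lt_clamp_le {l r z t} : l < t -> t < clamp l r z -> t < z.
Proof. by rewrite /clamp lt_max lt_min => lt /orP[/lt_trans/(_ lt)|/andP[]//]; rewrite ltxx. Qed.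

Lemma clamp_id l r z : l <= z <= r -> clamp l r z = z.
Proof. by case/andP=> lz zr; rewrite /clamp (min_l zr) (max_r lz). Qed.

Lemma clamp_l l r z : l <= r -> z <= l -> clamp l r z = l.
Proof. by move=> lr zl; rewrite /clamp (min_l (le_trans zl lr)) (max_l zl). Qed.

Lemma clamp_r l r z : l <= r -> r <= z -> clamp l r z = r.
Proof. by move=> lr rz; rewrite /clamp (min_r rz) (max_r lr). Qed.

(* If F is a primitive of t |-> (t - z) g t, then vincr F l (clamp l r z) r is
   the integral of |t - z| g t over [l, r]. *)
Definition vincr (F : R -> R) l m r : R := (F r - F m) - (F m - F l).

Lemma norm_incr_le_vincr (F G : R -> R) z l r : l <= r ->
  (forall e l' r', l <= l' -> l' <= r' -> r' <= r ->
     {in `]l', r'[%R, forall t, `|t - z| = e * (t - z)} ->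
     `|F r' - F l'| <= e * (G r' - G l')) ->
  `|F r - F l| <= vincr G l (clamp l r z) r.
Proof.
move=> lr piece; set m := clamp l r z; have /andP[lm mr] := clamp_itv z lr.
have -> : F r - F l = (F r - F m) + (F m - F l) by rewrite addrA subrK.
apply: le_trans (ler_normD _ _) _; rewrite /vincr; apply: lerD.
- rewrite -[leRHS]mul1r; apply: piece => // t; rewrite in_itv /= => /andP[mt tr].
  by rewrite mul1r ger0_norm // subr_ge0 (ltW (clamp_lt_le mt tr)).
- rewrite -[leRHS]mulN1r; apply: piece => // t; rewrite in_itv /= => /andP[lt tm].
  by rewrite mulN1r ler0_norm ?opprB // subr_le0 (ltW (lt_clamp_le lt tm)).
Qed.

Lemma vincr_reflect {F G : R -> R} l m r : (forall t, F t = G (1 - t)) ->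
  vincr F l m r = vincr G (1 - r) (1 - m) (1 - l).
Proof. by move=> FG; rewrite /vincr !FG; ring. Qed.

Definition Gam z t : R := (t - z) ^+ 2 / 2.

Definition Psi s A B z t : R :=
  B * (t `^ (s + 2) / (s + 2) - z * t `^ (s + 1) / (s + 1))
  + A * ((1 - t) `^ (s + 2) / (s + 2) - (1 - z) * (1 - t) `^ (s + 1) / (s + 1)).

Lemma is_derive_Gam z t : is_derive t 1 (Gam z) (t - z).
Proof. by apply: is_derive_eq; rewrite /GRing.scale /=; field. Qed.

Lemma within_continuous_Gam (D : set R) z : {within D, continuous (Gam z)}.
Proof.
apply: continuous_subspaceT => t.
exact: is_derive_continuous (is_derive_Gam z t).
Qed.

Lemma is_derive_Psi s A B z t : 0 < s -> 0 < t < 1 ->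
  is_derive t 1 (Psi s A B z) ((t - z) * (B * t `^ s + A * (1 - t) `^ s)).
Proof.
move=> s0 /andP[t0 t1]; have t1' : 0 < 1 - t by rewrite subr_gt0.
have := is_derive_powR_comp (s + 2) (is_derive_oneB t) t1'.
have := is_derive_powR_comp (s + 1) (is_derive_oneB t) t1'.
have := is_derive1_powR (s + 2) t0.
have := is_derive1_powR (s + 1) t0.
rewrite /Psi => ? ? ? ?; apply: is_derive_eq.
rewrite /GRing.scale /= !addrK (_ : s + 2 - 1 = s + 1); last by ring.
rewrite !powR_addr1 ?(ltW t0) ?(ltW t1') //.
by field; rewrite !gt_eqF // ?addr_gt0.
Qed.

Lemma within_continuous_Psi s A B z l r : 0 < s -> 0 <= l -> r <= 1 ->
  {within `[l, r], continuous (Psi s A B z)}.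
Proof.
move=> s0 l0 r1.
have sub01 : `[l, r] `<=` `[0, 1] by apply: subset_itv; rewrite bnd_simp.
apply: (continuous_subspaceW sub01) => x.
have s1 : 0 < s + 1 by rewrite addr_gt0.
have s2 : 0 < s + 2 by rewrite addr_gt0.
have := within01_continuous_powR _ s1 x; have := within01_continuous_powR _ s2 x.
have := within01_continuous_powR_oneB _ s1 x.
have := within01_continuous_powR_oneB _ s2 x.
move=> c4 c3 c2 c1; rewrite /Psi.
apply: cvgD; (apply: cvgM; first exact: cvg_cst); apply: cvgB;
  (apply: cvgM; last exact: cvg_cst); try (apply: cvgM; first exact: cvg_cst).
- exact: c2.
- exact: c1.
- exact: c4.
- exact: c3.
Qed.

Lemma Gam_reflect z t : Gam z t = Gam (1 - z) (1 - t).
Proof. by rewrite /Gam; ring. Qed.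

Lemma Psi_reflect s A B z t : Psi s A B z t = Psi s B A (1 - z) (1 - t).
Proof. by rewrite /Psi !subKr; ring. Qed.

Lemma vincr_Gam_gt0 z l r : l < r -> 0 < vincr (Gam z) l (clamp l r z) r.
Proof.
move=> lr; have rl0 : 0 < r - l by rewrite subr_gt0.
have [zl|lz] := lerP z l.
  rewrite clamp_l ?(ltW lr) // /vincr /Gam.
  have : 0 <= (r - l) * (l - z) by apply: mulr_ge0; lra.
  nra.
have [rz|zr] := lerP r z.
  rewrite clamp_r ?(ltW lr) // /vincr /Gam.
  have : 0 <= (r - l) * (z - r) by apply: mulr_ge0; lra.
  nra.
rewrite clamp_id ?(ltW lz) ?(ltW zr) // /vincr /Gam; nra.
Qed.

Lemma vincr_Psi_ge s A B z l r : 0 < s -> s <= 1 -> 0 <= A <= B ->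
  0 <= l -> l <= r -> r <= 1 ->
  A * vincr (Gam z) l (clamp l r z) r <= vincr (Psi s A B z) l (clamp l r z) r.
Proof.
move=> s0 s1 AB l0 lr r1.
rewrite -subr_ge0 (_ : _ - _ = vincr (fun t => Psi s A B z t - A * Gam z t)
  l (clamp l r z) r); last by rewrite /vincr; ring.
apply: le_trans (@norm_incr_le_vincr (fun=> 0) _ z l r lr _).
  by rewrite subrr normr0.
move=> e l' r' ll' l'r' r'r sgn; rewrite subrr normr0 mulrBr subr_ge0.
have l'0 : 0 <= l' by exact: le_trans ll'.
have r'1 : r' <= 1 by exact: le_trans r1.
have t01 := in_itv_oo01 l'0 r'1.
apply: (@is_derive_ge0_le (fun t => e * (Psi s A B z t - A * Gam z t))
  (fun t => `|t - z| * (B * t `^ s + A * (1 - t) `^ s - A))) => [//|t tlr|t tlr|x].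
- have := @is_derive_Psi s A B z t s0 (t01 t tlr); have := is_derive_Gam z t.
  move=> ? ?; apply: is_derive_eq; rewrite sgn //.
  by rewrite /GRing.scale /=; ring.
- by rewrite mulr_ge0 // subr_ge0 powR_weight_ge ?t01.
- apply: cvgM; first exact: cvg_cst.
  apply: cvgB; last (apply: cvgM; first exact: cvg_cst).
    exact: within_continuous_Psi.
  exact: within_continuous_Gam.
Qed.

Lemma vincr_Gam_inner al la : vincr (Gam (al * la)) 0 (al * la) (1 - al) = gamma2 al la.
Proof. by rewrite /vincr /Gam /gamma2 /gamma1; field. Qed.

Lemma vincr_Gam_outer al la : vincr (Gam (al * la)) 0 (1 - al) (1 - al) = gamma1 al la.
Proof. by rewrite /vincr /Gam /gamma1; field. Qed.

Lemma vincr_Psi_inner s A B al la : 0 < s -> 0 <= al * la <= 1 ->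
  vincr (Psi s A B (al * la)) 0 (al * la) (1 - al) = c1 al la s * B + c2 al la s * A.
Proof.
move=> s0 /andP[z0 z1]; have s1 : 0 < s + 1 by rewrite addr_gt0.
rewrite /vincr /Psi /c1 /c2 subr0 subKr !powR1 !powR0 ?gt_eqF ?addr_gt0 //=.
rewrite (_ : s + 2 = s + 1 + 1); last by ring.
rewrite (powR_addr1 z0 s1) (@powR_addr1 (1 - al * la) (s + 1)) ?subr_ge0 //.
by field; rewrite !gt_eqF ?addr_gt0.
Qed.

Lemma vincr_Psi_outer s A B al la : 0 < s ->
  vincr (Psi s A B (al * la)) 0 (1 - al) (1 - al) = c3 al la s * B + c4 al la s * A.
Proof.
move=> s0; rewrite /vincr /Psi /c3 /c4 subr0 subKr !powR1 !powR0 ?gt_eqF ?addr_gt0 //=.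
by field; rewrite !gt_eqF ?addr_gt0.
Qed.

Definition lerp a b t : R := a + (b - a) * t.

Section kernel.
Variables a b s q : R.
Hypotheses (a_gt0 : 0 < a) (ab : a < b) (s_gt0 : 0 < s) (q_ge1 : 1 <= q)
  (sq_le1 : s * q <= 1).

Let A := a `^ (s * q).
Let B := b `^ (s * q).
Let K := (b - a) * (s + 1).

Let q_gt0 : 0 < q. Proof. exact: lt_le_trans q_ge1. Qed.
Let s_le_sq : s <= s * q. Proof. by rewrite ler_peMr // ltW. Qed.
Let s_le1 : s <= 1. Proof. exact: le_trans sq_le1. Qed.
Let b_gt0 : 0 < b. Proof. exact: lt_trans ab. Qed.
Let K_ge0 : 0 <= K. Proof. by rewrite mulr_ge0 // ?subr_ge0 ?addr_ge0 ?ltW. Qed.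

Definition Phi z t : R :=
  (t - z) * lerp a b t `^ (s + 1) - lerp a b t `^ (s + 2) / ((s + 2) * (b - a)).

Definition young_prim th z t : R :=
  K * (th `^ q^-1 * (Psi s A B z t / (q * th) + (1 - q^-1) * Gam z t)).

Lemma lerp_gt0 {t} : 0 <= t -> 0 < lerp a b t.
Proof. by move=> t0; rewrite /lerp ltr_wpDr // mulr_ge0 // subr_ge0 ltW. Qed.

Lemma is_derive_Phi z t : 0 <= t ->
  is_derive t 1 (Phi z) (K * ((t - z) * lerp a b t `^ s)).
Proof.
move=> t0; have x0 := lerp_gt0 t0.
have dx : is_derive t 1 (lerp a b) (b - a).
  by apply: is_derive_eq; rewrite /GRing.scale /=; ring.
have := is_derive_powR_comp (s + 1) dx x0.
have := is_derive_powR_comp (s + 2) dx x0.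
rewrite /Phi => ? ?; apply: is_derive_eq.
rewrite /GRing.scale /= addrK (_ : s + 2 - 1 = s + 1); last by ring.
rewrite powR_addr1 ?(ltW x0) // /K.
by field; rewrite !gt_eqF ?subr_gt0 ?addr_gt0.
Qed.

Lemma within_continuous_Phi z l r : 0 <= l -> {within `[l, r], continuous (Phi z)}.
Proof.
move=> l0; apply: continuous_in_subspaceT => t.
rewrite inE /= in_itv /= => /andP[lt _].
exact: is_derive_continuous (@is_derive_Phi z t (le_trans l0 lt)).
Qed.

Lemma lerp_powR_le t : 0 < t < 1 ->
  lerp a b t `^ (s * q) <= B * t `^ s + A * (1 - t) `^ s.
Proof.
move=> /andP[t0 t1]; have t'0 : 0 < 1 - t by rewrite subr_gt0.
have t'1 : 1 - t <= 1 by rewrite lerBlDr lerDl ltW.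
have sq01 : 0 <= s * q <= 1 by rewrite sq_le1 mulr_ge0 ?ltW.
rewrite (_ : lerp a b t = b * t + a * (1 - t)); last by rewrite /lerp; ring.
have bt0 : 0 <= b * t by rewrite mulr_ge0 ?ltW.
have at0 : 0 <= a * (1 - t) by rewrite mulr_ge0 ?ltW.
apply: le_trans (powR_subadditive _ _ _ bt0 at0 sq01) _.
rewrite !powRM ?(ltW t0) ?(ltW t'0) ?(ltW a_gt0) ?(ltW b_gt0) // /A /B.
apply: lerD; rewrite ler_pM2l ?powR_gt0 //; apply: ger_powR => //.
- by rewrite t0 ltW.
- by rewrite t'0.
Qed.

Lemma lerp_powR_le_young th t : 0 < th -> 0 < t < 1 ->
  lerp a b t `^ s
  <= th `^ q^-1 * ((B * t `^ s + A * (1 - t) `^ s) / (q * th) + (1 - q^-1)).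
Proof.
move=> th0 t01.
have w0 : 0 <= B * t `^ s + A * (1 - t) `^ s by rewrite addr_ge0 // mulr_ge0 // powR_ge0.
apply: le_trans (young_powR_inv_weighted _ _ _ w0 q_ge1 th0).
rewrite -[in leLHS](mulfK (lt0r_neq0 q_gt0) s) powRrM.
by apply: ge0_ler_powR; rewrite ?invr_ge0 ?nnegrE ?powR_ge0 ?(ltW q_gt0) ?lerp_powR_le.
Qed.

Lemma Phi_incr_le_young_prim th e z l r : 0 < th -> 0 <= l -> l <= r -> r <= 1 ->
  {in `]l, r[%R, forall t, `|t - z| = e * (t - z)} ->
  `|Phi z r - Phi z l| <= e * (young_prim th z r - young_prim th z l).
Proof.
move=> th0 l0 lr r1 sgn; rewrite mulrBr.
have t01 := in_itv_oo01 l0 r1.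
apply: (@is_derive_norm_le _ (fun t => e * young_prim th z t)
  (fun t => K * ((t - z) * lerp a b t `^ s))
  (fun t => `|t - z| * (K * (th `^ q^-1 *
     ((B * t `^ s + A * (1 - t) `^ s) / (q * th) + (1 - q^-1))))) l r lr).
- by move=> t /t01 /andP[t0 _]; exact: is_derive_Phi (ltW t0).
- move=> t tlr; have := @is_derive_Psi s A B z t s_gt0 (t01 t tlr).
  have := is_derive_Gam z t; move=> ? ?; apply: is_derive_eq.
  rewrite sgn // /young_prim /GRing.scale /=.
  by rewrite mulr0 add0r; ring.
- move=> t tlr.
  rewrite (normrM K) (ger0_norm K_ge0) normrM (ger0_norm (powR_ge0 _ _)) mulrCA.
  apply: ler_wpM2l; first exact: normr_ge0.
  apply: ler_wpM2l; first exact: K_ge0.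
  exact: lerp_powR_le_young (t01 t tlr).
- exact: within_continuous_Phi.
- move=> x; do 3 (apply: cvgM; first exact: cvg_cst).
  apply: cvgD; apply: cvgM; try exact: cvg_cst.
    exact: within_continuous_Psi.
  exact: within_continuous_Gam.
Qed.

Lemma Phi_incr_le_young th z l r : 0 < th -> 0 <= l -> l <= r -> r <= 1 ->
  `|Phi z r - Phi z l| <= K * (th `^ q^-1 *
    (vincr (Psi s A B z) l (clamp l r z) r / (q * th)
     + (1 - q^-1) * vincr (Gam z) l (clamp l r z) r)).
Proof.
move=> th0 l0 lr r1.
have -> : K * (th `^ q^-1 * (vincr (Psi s A B z) l (clamp l r z) r / (q * th)
     + (1 - q^-1) * vincr (Gam z) l (clamp l r z) r))
    = vincr (young_prim th z) l (clamp l r z) r by rewrite /vincr /young_prim; ring.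
apply: norm_incr_le_vincr lr _ => e l' r' ll' l'r' r'r.
by apply: Phi_incr_le_young_prim => //; [exact: le_trans ll' | exact: le_trans r1].
Qed.

Lemma Phi_incr_le z l r : 0 <= l -> l <= r -> r <= 1 ->
  `|Phi z r - Phi z l| <= K * (vincr (Gam z) l (clamp l r z) r `^ (1 - q^-1)
                              * vincr (Psi s A B z) l (clamp l r z) r `^ q^-1).
Proof.
move=> l0 lr r1; have [->|lr'] := eqVneq l r.
  by rewrite subrr normr0 mulr_ge0 // mulr_ge0 // powR_ge0.
have A_gt0 : 0 < A by rewrite powR_gt0.
have AB : 0 <= A <= B by rewrite ltW //= ge0_ler_powR ?nnegrE ?mulr_ge0 ?ltW.
have G_gt0 : 0 < vincr (Gam z) l (clamp l r z) r.
  by apply: vincr_Gam_gt0; rewrite lt_neqAle lr' lr.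
have AGC := @vincr_Psi_ge s A B z l r s_gt0 s_le1 AB l0 lr r1.
apply: young_weighted_optimum => //.
  exact: lt_le_trans (mulr_gt0 A_gt0 G_gt0) AGC.
by move=> th th0; exact: Phi_incr_le_young.
Qed.

End kernel.

Lemma DeltaE a b s al la : 0 < a -> a < b -> 0 < s ->
  Delta a b al la s = `|(Phi a b s (al * la) (1 - al) - Phi a b s (al * la) 0)
     + (Phi a b s (1 - (1 - al) * la) 1 - Phi a b s (1 - (1 - al) * la) (1 - al))|.
Proof.
move=> a0 ab s0; have b0 : 0 < b by exact: lt_trans ab.
have s2 : 0 < s + 2 by rewrite addr_gt0.
have L_pow : Lmean (s + 1) a b `^ (s + 1)
    = (b `^ (s + 2) - a `^ (s + 2)) / ((s + 2) * (b - a)).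
  rewrite /Lmean (_ : s + 1 + 1 = s + 2); last by ring.
  rewrite -powRrM mulVf ?gt_eqF ?addr_gt0 // powRr1 //.
  rewrite divr_ge0 ?mulr_ge0 ?subr_ge0 ?(ltW s2) ?(ltW ab) //.
  by apply: ge0_ler_powR; rewrite ?nnegrE ?(ltW s2) ?(ltW a0) ?(ltW b0) ?(ltW ab).
rewrite /Delta L_pow /Phi /lerp mulr0 mulr1 addr0 [a + (b - a)]addrC subrK.
rewrite (_ : a + (b - a) * (1 - al) = Amean al a b); last by rewrite /Amean; ring.
by congr `|_|; rewrite /Amean; ring.
Qed.

End inequality.

Theorem mainTheorem7 (R : realType) (a b q s alpha lambda : R) :
  0 < a -> a < b -> 1 <= q -> 0 < s -> s < q^-1 ->
  0 <= alpha <= 1 -> 0 <= lambda <= 1 ->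
  (alpha * lambda <= 1 - alpha -> 1 - alpha <= 1 - lambda * (1 - alpha) ->
    Delta a b alpha lambda s <=
    (b - a) * (s + 1) *
    (gamma2 alpha lambda `^ (1 - q^-1) *
       (c1 alpha lambda s * b `^ (s * q) + c2 alpha lambda s * a `^ (s * q)) `^ (q^-1)
     + gamma2 (1 - alpha) lambda `^ (1 - q^-1) *
       (c2 (1 - alpha) lambda s * b `^ (s * q) + c1 (1 - alpha) lambda s * a `^ (s * q)) `^ (q^-1)))
  /\
  (alpha * lambda <= 1 - lambda * (1 - alpha) -> 1 - lambda * (1 - alpha) <= 1 - alpha ->
    Delta a b alpha lambda s <=
    (b - a) * (s + 1) *
    (gamma2 alpha lambda `^ (1 - q^-1) *
       (c1 alpha lambda s * b `^ (s * q) + c2 alpha lambda s * a `^ (s * q)) `^ (q^-1)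
     + gamma1 (1 - alpha) lambda `^ (1 - q^-1) *
       (c4 (1 - alpha) lambda s * b `^ (s * q) + c3 (1 - alpha) lambda s * a `^ (s * q)) `^ (q^-1)))
  /\
  (1 - alpha <= alpha * lambda -> alpha * lambda <= 1 - lambda * (1 - alpha) ->
    Delta a b alpha lambda s <=
    (b - a) * (s + 1) *
    (gamma1 alpha lambda `^ (1 - q^-1) *
       (c3 alpha lambda s * b `^ (s * q) + c4 alpha lambda s * a `^ (s * q)) `^ (q^-1)
     + gamma2 (1 - alpha) lambda `^ (1 - q^-1) *
       (c2 (1 - alpha) lambda s * b `^ (s * q) + c1 (1 - alpha) lambda s * a `^ (s * q)) `^ (q^-1))).
Proof.
move=> a0 ab q1 s0 sq /andP[al0 al1] /andP[la0 la1].
have q0 : 0 < q := lt_le_trans ltr01 q1.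
have sq1 : s * q <= 1 by rewrite -(mulVf (lt0r_neq0 q0)) ler_pM2r // ltW.
have r0 : 0 <= 1 - alpha by rewrite subr_ge0.
have r1 : 1 - alpha <= 1 by rewrite lerBlDr lerDl.
have z1 : 0 <= alpha * lambda <= 1 by rewrite mulr_ge0 //= mulr_ile1.
have z2 : 0 <= (1 - alpha) * lambda <= 1 by rewrite mulr_ge0 //= mulr_ile1.
have incr_le := Phi_incr_le a b s q a0 ab s0 q1 sq1.
have first := incr_le (alpha * lambda) _ _ (lexx 0) r0 r1.
have second := incr_le (1 - (1 - alpha) * lambda) _ _ r0 r1 (lexx 1).
(* the second half is the mirror image of the first, with 1 - alpha for alpha *)
rewrite (vincr_reflect _ _ _ (Gam_reflect _)) (vincr_reflect _ _ _ (Psi_reflect _ _ _ _))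
  subrr [1 - (1 - _ * _)]subKr in second.
rewrite [lambda * _]mulrC DeltaE //.
split; [|split] => h1 h2; apply: le_trans (ler_normD _ _) _; rewrite mulrDr; apply: lerD.
- rewrite clamp_id in first; last by rewrite h1 andbT; case/andP: z1.
  by rewrite (vincr_Gam_inner alpha lambda) (vincr_Psi_inner _ _ _ _ _ s0 z1) in first.
- rewrite clamp_id in second; last by rewrite h2 lerBlDr lerDl; case/andP: z2.
  rewrite subKr (vincr_Gam_inner (1 - alpha) lambda) in second.
  by rewrite (vincr_Psi_inner _ _ _ _ _ s0 z2) [c1 _ _ _ * _ + _]addrC in second.
- rewrite clamp_id in first; last by rewrite (le_trans h1 h2) andbT; case/andP: z1.
  by rewrite (vincr_Gam_inner alpha lambda) (vincr_Psi_inner _ _ _ _ _ s0 z1) in first.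
- rewrite clamp_l // (vincr_Gam_outer (1 - alpha) lambda) in second.
  by rewrite (vincr_Psi_outer _ _ _ _ _ s0) [c3 _ _ _ * _ + _]addrC in second.
- rewrite clamp_r // (vincr_Gam_outer alpha lambda) in first.
  by rewrite (vincr_Psi_outer _ _ _ _ _ s0) in first.
- rewrite clamp_id in second; last by rewrite (le_trans h1 h2) lerBlDr lerDl; case/andP: z2.
  rewrite subKr (vincr_Gam_inner (1 - alpha) lambda) in second.
  by rewrite (vincr_Psi_inner _ _ _ _ _ s0 z2) [c1 _ _ _ * _ + _]addrC in second.
Qed.
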